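(* For $n\ge 2$ and $1\le m\le n$, $$s_u(n,m)\le\frac{(n-1)!}{(m-1)!}\big(H(n-1)\big)^{m-1},$$ where $s_u(n,m)$ are the unsigned Stirling numbers of the first kind and $H(N)=\sum_{i=1}^N\frac1i$. *)

From mathcomp Require Import all_boot all_order all_algebra.
Set Implicit Arguments. Unset Strict Implicit. Unset Printing Implicit Defensive.
Import Order.TTheory GRing.Theory Num.Theory.

Fixpoint stirling1u (n k : nat) : nat :=
  match n, k with
  | 0, 0 => 1
  | 0, _.+1 => 0
  | _.+1, 0 => 0
  | n'.+1, k'.+1 => n' * stirling1u n' k + stirling1u n' k'
  end.

Local Open Scope ring_scope.

Definition harmonic (N : nat) : rat := \sum_(1 <= i < N.+1) (i%:R)^-1.

(* Induction on n via s_u(n+2, j+2) = (n+1) s_u(n+1, j+2) + s_u(n+1, j+1).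
   With H = H(n), the inductive bounds give
     s_u(n+2, j+2) <= (n+1)!/(j+1)! * (H^(j+1) + (j+1)/(n+1) * H^j),
   and the bracket is the beginning of the binomial expansion of
   (H + 1/(n+1))^(j+1) = H(n+1)^(j+1), all of whose terms are nonnegative. *)
From mathcomp Require Import all_boot all_order all_algebra.
From mathcomp Require Import ring.
Import Order.TTheory GRing.Theory Num.Theory.
Local Open Scope ring_scope.

Lemma stirling1uSS n k :
  stirling1u n.+1 k.+1 = (n * stirling1u n k.+1 + stirling1u n k)%N.
Proof. by []. Qed.

Lemma stirling1u_1 n : stirling1u n.+1 1 = n`!.
Proof. by elim: n => [//|n IHn]; rewrite stirling1uSS IHn addn0 factS. Qed.

Lemma harmonicS n : harmonic n.+1 = harmonic n + n.+1%:R^-1.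
Proof. by rewrite /harmonic big_nat_recr. Qed.

Lemma harmonic_ge0 n : 0 <= harmonic n.
Proof. by apply: sumr_ge0 => i _; rewrite invr_ge0 ler0n. Qed.

Lemma exprDn_ge2 (R : numDomainType) (x a : R) j : 0 <= x -> 0 <= a ->
  x ^+ j.+1 + j.+1%:R * a * x ^+ j <= (x + a) ^+ j.+1.
Proof.
move=> x_ge0 a_ge0; elim: j => [|j IHj]; first by rewrite !expr1 expr0 mulr1 mul1r.
rewrite [(x + a) ^+ j.+2]exprS.
apply: le_trans (ler_wpM2l (addr_ge0 x_ge0 a_ge0) IHj).
have -> : (x + a) * (x ^+ j.+1 + j.+1%:R * a * x ^+ j) =
    x ^+ j.+2 + j.+2%:R * a * x ^+ j.+1 + a * (j.+1%:R * a * x ^+ j).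
  by rewrite !exprS -[j.+2%:R]natr1 -[j.+1%:R]natr1; ring.
by rewrite lerDl !mulr_ge0 ?exprn_ge0.
Qed.

Lemma stirling1u_le_harmonic n k :
  (stirling1u n.+1 k.+1)%:R <= (n`!)%:R * harmonic n ^+ k / (k`!)%:R :> rat.
Proof.
elim: n k => [|n IHn] [|j].
- by rewrite expr0 mulr1.
- by rewrite /= mulr0n !mulr_ge0 ?invr_ge0 ?exprn_ge0 ?harmonic_ge0.
- by rewrite stirling1u_1 expr0 mulr1 fact0 invr1 mulr1.
rewrite stirling1uSS natrD natrM.
set H := harmonic n; set c : rat := n.+1%:R.
set F : rat := (n`!)%:R; set K : rat := (j`!)%:R.
have c_gt0 : 0 < c by rewrite ltr0n.
have F_gt0 : 0 < F by rewrite ltr0n fact_gt0.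
have K_gt0 : 0 < K by rewrite ltr0n fact_gt0.
apply: le_trans (lerD (ler_wpM2l (ltW c_gt0) (IHn j.+1)) (IHn j)) _.
rewrite harmonicS -/H (factS n) (factS j) !natrM -/c -/F -/K.
have -> : c * (F * H ^+ j.+1 / (j.+1%:R * K)) + F * H ^+ j / K =
    c * F / (j.+1%:R * K) * (H ^+ j.+1 + j.+1%:R * c^-1 * H ^+ j).
  by field; rewrite !(addrC 1) !natr1 !pnatr_eq0 /= -lt0n fact_gt0.
rewrite [X in _ <= X]mulrAC ler_pM2l ?divr_gt0 ?mulr_gt0 //.
by apply: exprDn_ge2; rewrite ?harmonic_ge0 // invr_ge0 ltW.
Qed.

Theorem lemma5p1 (n m : nat) (hn : (2 <= n)%N) (hm1 : (1 <= m)%N) (hmn : (m <= n)%N) :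
  (stirling1u n m)%:R <=
    ((n.-1)`!)%:R / ((m.-1)`!)%:R * (harmonic n.-1) ^+ m.-1 :> rat.
Proof.
case: n hn hmn => [//|n] _ _; case: m hm1 => [//|m] _ /=.
by rewrite mulrAC stirling1u_le_harmonic.
Qed.
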